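(* Let $H(q,p)=\tfrac12\langle B(q)p,p\rangle+V(q)$ on $U\times\mathbb R^2$, $U\subset\mathbb R^2$ open containing $(0,0)$, with $B$ smooth symmetric positive definite, $V$ smooth with a nondegenerate maximum at $(0,0)$, $V(0,0)=0$, and $\frac{\partial B}{\partial q_2}(q_1,0)=0$. Let $\gamma$ be an orbit in the unstable manifold of $O=(0,0,0,0)$ whose part in $U\times\mathbb R^2$ (outgoing part) is $q_1=q_1^0(t)$, $q_2=0$ for $t\le t_1$, with $q_1^0$ increasing, positive and tending to $0$ as $t\to-\infty$, and write it as $p_1=S_0'(q_1)$, $p_2=S_1(q_1)$ for $q_1\in(0,q_1^0(t_1)]$. Let $V(q)=V_0(q_1)+V_1(q_1)q_2+O(q_2^2)$, $B(q_1,0)=B_0(q_1)=\begin{pmatrix}b_{110}&b_{120}\\ b_{120}&b_{220}\end{pmatrix}$ and $\beta(q_1)=\det B_0(q_1)/b_{220}(q_1)$. Then: (a) the dynamics along the outgoing part of $\gamma$ is given by $\dot q_1=\beta(q_1)S_0'(q_1)$; (b) $S_0'(q_1)=\sqrt{-2V_0(q_1)/\beta(q_1)}$ and $S_1(q_1)=-\frac{b_{120}(q_1)}{b_{220}(q_1)}S_0'(q_1)$; (c) $S_1'(q_1)\,\beta(q_1)\,S_0'(q_1)=-V_1(q_1)$.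
   Context: Smooth means $C^r$, $r\ge2$, or analytic. Hamilton's equations: $\dot q=B(q)p$, $\dot p=-\tfrac12\partial_q\langle B(q)p,p\rangle-\nabla V(q)$. *)

From Stdlib Require Import Reals.
From Coquelicot Require Import Coquelicot.
Open Scope R_scope.

Definition pd1 (f : R -> R -> R) (x y : R) : R := Derive (fun s => f s y) x.
Definition pd2 (f : R -> R -> R) (x y : R) : R := Derive (fun s => f x s) y.

Definition C1_on (U : R -> R -> Prop) (f : R -> R -> R) : Prop :=
  forall x y, U x y ->
    continuity_2d_pt f x y /\
    ex_derive (fun s => f s y) x /\ ex_derive (fun s => f x s) y /\
    continuity_2d_pt (pd1 f) x y /\ continuity_2d_pt (pd2 f) x y.

(* C^2 on U ("smooth" = C^r, r >= 2; C^2 is the weakest case). *)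
Definition C2_on (U : R -> R -> Prop) (f : R -> R -> R) : Prop :=
  C1_on U f /\ C1_on U (pd1 f) /\ C1_on U (pd2 f).

Definition pos_def_at (b11 b12 b22 : R -> R -> R) (x y : R) : Prop :=
  forall u v, (u, v) <> (0, 0) ->
    u * u * b11 x y + 2 * u * v * b12 x y + v * v * b22 x y > 0.

Definition nondeg_max_at0 (V : R -> R -> R) : Prop :=
  (exists eps, eps > 0 /\
     forall x y, Rabs x < eps -> Rabs y < eps -> V x y <= V 0 0) /\
  pd1 (pd1 V) 0 0 * pd2 (pd2 V) 0 0 - pd2 (pd1 V) 0 0 * pd1 (pd2 V) 0 0 <> 0.

(* Hamilton's equations for H = 1/2 <B(q)p,p> + V(q) at time t. *)
Definition hamilton_at (b11 b12 b22 V : R -> R -> R)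
    (q1 q2 p1 p2 : R -> R) (t : R) : Prop :=
  let x := q1 t in let y := q2 t in let a := p1 t in let c := p2 t in
  is_derive q1 t (b11 x y * a + b12 x y * c) /\
  is_derive q2 t (b12 x y * a + b22 x y * c) /\
  is_derive p1 t (- / 2 * (pd1 b11 x y * a * a + 2 * pd1 b12 x y * a * c
                           + pd1 b22 x y * c * c) - pd1 V x y) /\
  is_derive p2 t (- / 2 * (pd2 b11 x y * a * a + 2 * pd2 b12 x y * a * c
                           + pd2 b22 x y * c * c) - pd2 V x y).

(* V(q) = V0(q1) + V1(q1) q2 + O(q2^2) *)
Definition V0 (V : R -> R -> R) (x : R) : R := V x 0.
Definition V1 (V : R -> R -> R) (x : R) : R := pd2 V x 0.

Definition beta (b11 b12 b22 : R -> R -> R) (x : R) : R :=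
  (b11 x 0 * b22 x 0 - b12 x 0 * b12 x 0) / b22 x 0.

From Stdlib Require Import Reals Lra Psatz.
From Coquelicot Require Import Coquelicot.
Open Scope R_scope.

(* On the outgoing part q2 stays 0, so q2' = b12 p1 + b22 p2 = 0 fixes
   p2 = -(b12/b22) p1, and then q1' = b11 p1 + b12 p2 = beta p1.  Along the
   axis the energy H = beta p1^2 / 2 + V0(q1) is conserved, and it vanishes
   because the orbit leaves O where H = 0; q1 increasing forces p1 >= 0, which
   selects the positive square root.  Finally, differentiating p2 = S1(q1) and
   using p2' = -dV/dq2 (the dB/dq2 terms vanish on the axis) gives (c). *)

Lemma is_derive_ge0_of_le_left (f : R -> R) (t l : R) :
  is_derive f t l -> (forall h, h < 0 -> f (t + h) <= f t) -> 0 <= l.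
Proof.
  intros Hd Hle. apply is_derive_Reals in Hd.
  destruct (Rle_dec 0 l) as [|Hl]; [assumption|exfalso].
  destruct (Hd (- l) ltac:(lra)) as [d Hdl].
  pose proof (cond_pos d) as Hdpos.
  assert (Hquot := Hdl (- (d / 2)) ltac:(lra)
                     ltac:(rewrite Rabs_Ropp, Rabs_pos_eq; lra)).
  assert (Hnonneg : 0 <= (f (t + - (d / 2)) - f t) / - (d / 2)).
  { replace ((f (t + - (d / 2)) - f t) / - (d / 2))
      with ((f t - f (t + - (d / 2))) / (d / 2)) by (field; lra).
    apply Rdiv_le_0_compat; [specialize (Hle (- (d / 2)) ltac:(lra))|]; lra. }
  apply Rabs_lt_between in Hquot. lra.
Qed.

Lemma is_derive_eq0_of_const_left (f : R -> R) (t l : R) :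
  is_derive f t l -> (forall h, h < 0 -> f (t + h) = f t) -> l = 0.
Proof.
  intros Hd Hc.
  assert (Hl : 0 <= l).
  { apply (is_derive_ge0_of_le_left f t l Hd). intros h Hh. rewrite Hc; lra. }
  assert (Hopp : 0 <= - l).
  { apply (is_derive_ge0_of_le_left (fun s => - f s) t (- l) (is_derive_opp f t l Hd)).
    intros h Hh. rewrite Hc; lra. }
  lra.
Qed.

Lemma is_derive_continuity_pt (f : R -> R) (t l : R) :
  is_derive f t l -> continuity_pt f t.
Proof.
  intros Hd. apply derivable_continuous_pt.
  exists l. now apply is_derive_Reals.
Qed.

Lemma is_lim_minfty_derive0_eq (f : R -> R) (t1 l : R) :
  (forall t, t <= t1 -> is_derive f t 0) -> is_lim f m_infty l ->
  forall t, t <= t1 -> f t = l.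
Proof.
  intros Hd Hlim.
  assert (Hconst : forall t, t <= t1 -> f t = f t1).
  { intros t Ht. destruct (Req_dec t t1) as [->|Hne]; [reflexivity|].
    destruct (MVT_gen f t t1 (fun _ => 0)) as [c [_ Hc]].
    - intros x Hx. rewrite Rmax_right in Hx by lra. apply Hd. lra.
    - intros x Hx. rewrite Rmax_right in Hx by lra.
      apply (is_derive_continuity_pt f x 0), Hd. lra.
    - lra. }
  assert (Hlim1 : is_lim f m_infty (f t1)).
  { apply (is_lim_ext_loc (fun _ => f t1)); [|apply is_lim_const].
    exists t1. intros y Hy. symmetry. apply Hconst. lra. }
  apply is_lim_unique in Hlim, Hlim1. rewrite Hlim1 in Hlim.
  injection Hlim as <-. exact Hconst.
Qed.

Lemma is_lim_minfty_IVT (f : R -> R) (t1 l y : R) :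
  (forall t, t <= t1 -> continuity_pt f t) -> is_lim f m_infty l ->
  l < y <= f t1 -> exists t, t <= t1 /\ f t = y.
Proof.
  intros Hc Hlim Hy. destruct (Req_dec y (f t1)) as [->|Hne].
  { exists t1. split; [lra|reflexivity]. }
  destruct (IVT_Rbar_incr f m_infty t1 l (f t1) y Hlim
              (is_lim_continuity f t1 (Hc t1 (Rle_refl t1))))
    as [t [_ [Ht Hft]]].
  - intros x _ Hx. apply Hc. simpl in Hx. lra.
  - exact I.
  - simpl. lra.
  - exists t. simpl in Ht. split; [lra|exact Hft].
Qed.

Lemma is_derive_comp_left (f g h : R -> R) (t t1 v : R) :
  (forall s, s <= t1 -> f s = g (h s)) -> t < t1 ->
  ex_derive g (h t) -> is_derive h t v -> is_derive f t (v * Derive g (h t)).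
Proof.
  intros Hfgh Ht Hg Hh. apply (is_derive_ext_loc (fun s => g (h s))).
  - exists (mkposreal (t1 - t) ltac:(lra)). intros s Hs.
    change (Rabs (s - t) < t1 - t) in Hs. apply Rabs_lt_between' in Hs.
    symmetry. apply Hfgh. lra.
  - exact (is_derive_comp g h t _ _ (Derive_correct _ _ Hg) Hh).
Qed.

Lemma pos_def_at_b22_gt0 (b11 b12 b22 : R -> R -> R) (x y : R) :
  pos_def_at b11 b12 b22 x y -> 0 < b22 x y.
Proof.
  intros Hpd. specialize (Hpd 0 1 ltac:(intro E; inversion E; lra)). lra.
Qed.

Lemma pos_def_at_det_gt0 (b11 b12 b22 : R -> R -> R) (x y : R) :
  pos_def_at b11 b12 b22 x y -> 0 < b11 x y * b22 x y - b12 x y * b12 x y.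
Proof.
  intros Hpd. pose proof (pos_def_at_b22_gt0 _ _ _ _ _ Hpd) as H22.
  (* evaluate the form at (b22, -b12), where it equals b22 * det *)
  specialize (Hpd (b22 x y) (- b12 x y) ltac:(intro E; inversion E; lra)).
  nra.
Qed.

Lemma pos_def_at_beta_gt0 (b11 b12 b22 : R -> R -> R) (x : R) :
  pos_def_at b11 b12 b22 x 0 -> 0 < beta b11 b12 b22 x.
Proof.
  intros Hpd. unfold beta. apply Rdiv_lt_0_compat.
  - exact (pos_def_at_det_gt0 _ _ _ _ _ Hpd).
  - exact (pos_def_at_b22_gt0 _ _ _ _ _ Hpd).
Qed.

Lemma C1_on_is_derive_pd1 (U : R -> R -> Prop) (f : R -> R -> R) (x y : R) :
  C1_on U f -> U x y -> is_derive (fun s => f s y) x (pd1 f x y).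
Proof.
  intros Hf Hxy. destruct (Hf x y Hxy) as [_ [Hex _]]. exact (Derive_correct _ _ Hex).
Qed.

Definition H_axis (b11 b12 b22 V : R -> R -> R) (x a c : R) : R :=
  / 2 * (b11 x 0 * a * a + 2 * b12 x 0 * a * c + b22 x 0 * c * c) + V x 0.

Section Outgoing_part.

Variables (U : R -> R -> Prop) (b11 b12 b22 V : R -> R -> R).
Variables (q1 q2 p1 p2 : R -> R) (t1 : R).

Hypothesis Hsol : forall t, t <= t1 -> hamilton_at b11 b12 b22 V q1 q2 p1 p2 t.
Hypothesis Hq2 : forall t, t <= t1 -> q2 t = 0.
Hypothesis HinU : forall t, t <= t1 -> U (q1 t) 0.
Hypothesis HBpd : forall x, U x 0 -> pos_def_at b11 b12 b22 x 0.

Let b22_gt0 t (Ht : t <= t1) : 0 < b22 (q1 t) 0 :=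
  pos_def_at_b22_gt0 _ _ _ _ _ (HBpd _ (HinU t Ht)).

Lemma outgoing_p2 t : t <= t1 -> p2 t = - (b12 (q1 t) 0 / b22 (q1 t) 0) * p1 t.
Proof.
  intros Ht. destruct (Hsol t Ht) as [_ [Hdq2 _]]. rewrite (Hq2 t Ht) in Hdq2.
  assert (Hvel2 : b12 (q1 t) 0 * p1 t + b22 (q1 t) 0 * p2 t = 0).
  { apply (is_derive_eq0_of_const_left q2 t _ Hdq2). intros h Hh.
    rewrite (Hq2 t Ht), (Hq2 (t + h)) by lra. reflexivity. }
  pose proof (b22_gt0 t Ht). field_simplify; [|lra].
  apply (Rmult_eq_reg_l (b22 (q1 t) 0)); [field_simplify|]; lra.
Qed.

Lemma outgoing_is_derive_q1 t : t <= t1 -> is_derive q1 t (beta b11 b12 b22 (q1 t) * p1 t).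
Proof.
  intros Ht. destruct (Hsol t Ht) as [Hdq1 _]. rewrite (Hq2 t Ht) in Hdq1.
  replace (beta b11 b12 b22 (q1 t) * p1 t) with
    (b11 (q1 t) 0 * p1 t + b12 (q1 t) 0 * p2 t); [exact Hdq1|].
  rewrite (outgoing_p2 t Ht). unfold beta. pose proof (b22_gt0 t Ht). field. lra.
Qed.

Lemma outgoing_H_axis t : t <= t1 ->
  H_axis b11 b12 b22 V (q1 t) (p1 t) (p2 t)
  = / 2 * beta b11 b12 b22 (q1 t) * p1 t * p1 t + V0 V (q1 t).
Proof.
  intros Ht. unfold H_axis, beta, V0. rewrite (outgoing_p2 t Ht).
  pose proof (b22_gt0 t Ht). field. lra.
Qed.

Lemma outgoing_p1_ge0 t :
  (forall s, s < t -> q1 s < q1 t) -> t <= t1 -> 0 <= p1 t.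
Proof.
  intros Hinc Ht.
  assert (Hvel : 0 <= beta b11 b12 b22 (q1 t) * p1 t).
  { apply (is_derive_ge0_of_le_left q1 t _ (outgoing_is_derive_q1 t Ht)).
    intros h Hh. apply Rlt_le, Hinc. lra. }
  pose proof (pos_def_at_beta_gt0 _ _ _ _ (HBpd _ (HinU t Ht))). nra.
Qed.

Lemma outgoing_is_derive_p2 t :
  pd2 b11 (q1 t) 0 = 0 -> pd2 b12 (q1 t) 0 = 0 -> pd2 b22 (q1 t) 0 = 0 ->
  t <= t1 -> is_derive p2 t (- V1 V (q1 t)).
Proof.
  intros Z11 Z12 Z22 Ht. destruct (Hsol t Ht) as [_ [_ [_ Hdp2]]]. rewrite (Hq2 t Ht) in Hdp2.
  rewrite Z11, Z12, Z22 in Hdp2. unfold V1.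
  replace (- pd2 V (q1 t) 0) with (- / 2 * (0 * p1 t * p1 t + 2 * 0 * p1 t * p2 t
    + 0 * p2 t * p2 t) - pd2 V (q1 t) 0) by ring.
  exact Hdp2.
Qed.

Hypotheses (Hb11 : C1_on U b11) (Hb12 : C1_on U b12) (Hb22 : C1_on U b22)
  (HV : C1_on U V).

Lemma outgoing_is_derive_H t : t <= t1 ->
  is_derive (fun s => H_axis b11 b12 b22 V (q1 s) (p1 s) (p2 s)) t 0.
Proof.
  intros Ht. pose proof (HinU t Ht) as HU.
  destruct (Hsol t Ht) as [Hdq1 [_ [Hdp1 Hdp2]]].
  rewrite (Hq2 t Ht) in Hdq1, Hdp1.
  pose proof (C1_on_is_derive_pd1 U b11 _ _ Hb11 HU) as D11.
  pose proof (C1_on_is_derive_pd1 U b12 _ _ Hb12 HU) as D12.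
  pose proof (C1_on_is_derive_pd1 U b22 _ _ Hb22 HU) as D22.
  pose proof (C1_on_is_derive_pd1 U V _ _ HV HU) as DV.
  unfold H_axis. auto_derive.
  - repeat split; eexists; eassumption.
  - generalize (Derive (fun s => p2 s) t) as dp2. intros dp2.
    repeat match goal with |- context [Derive ?f ?x] =>
      erewrite (is_derive_unique f x) by eassumption end.
    (* the p2' terms are multiplied by q2' = b12 p1 + b22 p2, which is 0 *)
    transitivity (dp2 * (b12 (q1 t) 0 * p1 t + b22 (q1 t) 0 * p2 t)).
    + field.
    + rewrite (outgoing_p2 t Ht). pose proof (b22_gt0 t Ht). field. lra.
Qed.

Hypotheses (HU0 : U 0 0) (HV00 : V 0 0 = 0).
Hypotheses (Hlq1 : is_lim q1 m_infty 0) (Hlp1 : is_lim p1 m_infty 0)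
  (Hlp2 : is_lim p2 m_infty 0).

Lemma outgoing_is_lim_H :
  is_lim (fun s => H_axis b11 b12 b22 V (q1 s) (p1 s) (p2 s)) m_infty 0.
Proof.
  assert (Hcomp : forall f, C1_on U f -> is_lim (fun s => f (q1 s) 0) m_infty (f 0 0)).
  { intros f Hf. apply (is_lim_comp_continuous q1 (fun s => f s 0) m_infty 0 Hlq1).
    apply (@ex_derive_continuous R_AbsRing R_NormedModule).
    eexists. exact (C1_on_is_derive_pd1 U f 0 0 Hf HU0). }
  replace 0 with (/ 2 * (b11 0 0 * 0 * 0 + 2 * b12 0 0 * 0 * 0 + b22 0 0 * 0 * 0)
                  + V 0 0) at 1 by (rewrite HV00; ring).
  unfold H_axis.
  repeat first
    [ apply is_lim_plus'
    | apply (is_lim_mult _ _ _ (Finite _) (Finite _)); [| |exact I]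
    | apply is_lim_const
    | apply Hcomp; assumption
    | assumption ].
Qed.

Lemma outgoing_energy t : t <= t1 ->
  / 2 * beta b11 b12 b22 (q1 t) * p1 t * p1 t + V0 V (q1 t) = 0.
Proof.
  intros Ht. rewrite <- (outgoing_H_axis t Ht).
  exact (is_lim_minfty_derive0_eq _ t1 0 outgoing_is_derive_H outgoing_is_lim_H t Ht).
Qed.

Lemma outgoing_p1_sqrt t :
  (forall s, s < t -> q1 s < q1 t) -> t <= t1 ->
  p1 t = sqrt (- 2 * V0 V (q1 t) / beta b11 b12 b22 (q1 t)).
Proof.
  intros Hinc Ht. pose proof (outgoing_energy t Ht) as Hen.
  pose proof (pos_def_at_beta_gt0 _ _ _ _ (HBpd _ (HinU t Ht))).
  replace (- 2 * V0 V (q1 t) / beta b11 b12 b22 (q1 t)) with (p1 t * p1 t).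
  - symmetry. exact (sqrt_square _ (outgoing_p1_ge0 t Hinc Ht)).
  - field_simplify; [|lra].
    apply (Rmult_eq_reg_r (beta b11 b12 b22 (q1 t))); [field_simplify|]; lra.
Qed.

End Outgoing_part.

Theorem proposition2
  (U : R -> R -> Prop) (b11 b12 b22 V : R -> R -> R)
  (q1 q2 p1 p2 : R -> R) (t1 : R) (dS0 S1 : R -> R)
  (HUopen : open (fun z : R * R => U (fst z) (snd z)))
  (HU0 : U 0 0)
  (Hb11 : C2_on U b11) (Hb12 : C2_on U b12) (Hb22 : C2_on U b22)
  (HBpd : forall x y, U x y -> pos_def_at b11 b12 b22 x y)
  (HV : C2_on U V) (HVmax : nondeg_max_at0 V) (HV00 : V 0 0 = 0)
  (HdB : forall x, U x 0 ->
     pd2 b11 x 0 = 0 /\ pd2 b12 x 0 = 0 /\ pd2 b22 x 0 = 0)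
  (Hsol : forall t, t <= t1 -> hamilton_at b11 b12 b22 V q1 q2 p1 p2 t)
  (HinU : forall t, t <= t1 -> U (q1 t) (q2 t))
  (Hlq1 : is_lim q1 m_infty (Finite 0)) (Hlq2 : is_lim q2 m_infty (Finite 0))
  (Hlp1 : is_lim p1 m_infty (Finite 0)) (Hlp2 : is_lim p2 m_infty (Finite 0))
  (Hq2 : forall t, t <= t1 -> q2 t = 0)
  (Hq1pos : forall t, t <= t1 -> 0 < q1 t)
  (Hq1inc : forall s t, s < t -> t <= t1 -> q1 s < q1 t)
  (HS0 : forall t, t <= t1 -> p1 t = dS0 (q1 t))
  (HS1 : forall t, t <= t1 -> p2 t = S1 (q1 t))
  (HS1d : forall x, 0 < x < q1 t1 -> ex_derive S1 x) :
  (forall t, t <= t1 ->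
     is_derive q1 t (beta b11 b12 b22 (q1 t) * dS0 (q1 t))) /\
  (forall x, 0 < x <= q1 t1 ->
     dS0 x = sqrt (- 2 * V0 V x / beta b11 b12 b22 x) /\
     S1 x = - (b12 x 0 / b22 x 0) * dS0 x) /\
  (forall x, 0 < x < q1 t1 ->
     Derive S1 x * beta b11 b12 b22 x * dS0 x = - V1 V x).
Proof.
  assert (HinU0 : forall t, t <= t1 -> U (q1 t) 0)
    by (intros t Ht; rewrite <- (Hq2 t Ht); auto).
  assert (HBpd0 : forall x, U x 0 -> pos_def_at b11 b12 b22 x 0) by auto.
  pose proof (outgoing_is_derive_q1 U b11 b12 b22 V q1 q2 p1 p2 t1 Hsol Hq2 HinU0 HBpd0)
    as Hdq1.
  pose proof (outgoing_p2 U b11 b12 b22 V q1 q2 p1 p2 t1 Hsol Hq2 HinU0 HBpd0) as Hp2.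
  pose proof (outgoing_p1_sqrt U b11 b12 b22 V q1 q2 p1 p2 t1 Hsol Hq2 HinU0 HBpd0
                (proj1 Hb11) (proj1 Hb12) (proj1 Hb22) (proj1 HV) HU0 HV00 Hlq1 Hlp1 Hlp2)
    as Hp1.
  pose proof (outgoing_is_derive_p2 b11 b12 b22 V q1 q2 p1 p2 t1 Hsol Hq2) as Hdp2.
  assert (Hq1_onto : forall x, 0 < x <= q1 t1 -> exists t, t <= t1 /\ q1 t = x).
  { intros x Hx. apply (is_lim_minfty_IVT q1 t1 0 x); [|exact Hlq1|lra].
    intros t Ht. exact (is_derive_continuity_pt _ _ _ (Hdq1 t Ht)). }
  split; [|split].
  - intros t Ht. rewrite <- (HS0 t Ht). exact (Hdq1 t Ht).
  - intros x Hx. destruct (Hq1_onto x Hx) as [t [Ht <-]].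
    rewrite <- (HS0 t Ht), <- (HS1 t Ht). split.
    + exact (Hp1 t (fun s Hs => Hq1inc s t Hs Ht) Ht).
    + exact (Hp2 t Ht).
  - intros x Hx. destruct (Hq1_onto x ltac:(lra)) as [t [Ht <-]].
    assert (Htlt : t < t1) by (destruct (Req_dec t t1) as [->|]; lra).
    destruct (HdB _ (HinU0 t Ht)) as [Z11 [Z12 Z22]].
    pose proof (is_derive_comp_left p2 S1 q1 t t1 _ HS1 Htlt (HS1d _ Hx) (Hdq1 t Ht))
      as Hdp2'.
    rewrite <- (HS0 t Ht), <- (is_derive_unique _ _ _ (Hdp2 t Z11 Z12 Z22 Ht)),
      (is_derive_unique _ _ _ Hdp2').
    ring.
Qed.
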